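(* Let $(V_k)_{k=1,\dots,K}$ be an $(\varepsilon,\mu)$-admissible family for some $\varepsilon>0$ and $\mu\ge1$. Let $u\in V$ with $\operatorname{dist}(u,\mathcal M)\le\varepsilon_{model}$, and let $w=P_Wu+\eta$ with $\eta\in W$, $\|\eta\|\le\varepsilon_{noise}$. Let $\mathcal S:V\to[0,\infty)$ satisfy $r\operatorname{dist}(v,\mathcal M)\le\mathcal S(v)\le R\operatorname{dist}(v,\mathcal M)$ for all $v\in V$ with $0<r\le R$, and let $u^*(w)=u^*_{k^*}(w)$ where $k^*$ is any minimizer of $k\mapsto\mathcal S(u_k^*(w))$. Then $$\|u-u^*(w)\|\le\delta_{\kappa\rho}+\varepsilon_{noise},\qquad \rho=\mu(\varepsilon+\varepsilon_{noise})+(\mu+1)\varepsilon_{model},\quad\kappa=R/r.$$ The same estimate holds with $\kappa=1$ if instead $k^*$ is any minimizer of $k\mapsto\operatorname{dist}(u_k^*(w),\mathcal M)$.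
   Context: $V$ is a real Hilbert space, $\mathcal M\subset V$ is compact, $W\subset V$ is a subspace of finite dimension $m$, $P_W$ is the orthogonal projection onto $W$ and $W^\perp$ its orthogonal complement. For a linear subspace $\bar V$ with $\bar V\cap W^\perp=\{0\}$, $\mu(\bar V,W)=\max_{v\in\bar V,\,v\ne0}\|v\|/\|P_Wv\|$ (set $\mu(\{0\},W)=1$). A family of affine spaces $V_k=\bar u_k+\bar V_k$ ($\bar u_k\in V$, $\bar V_k$ linear of dimension $\le m$, $\bar V_k\cap W^\perp=\{0\}$), $k=1,\dots,K$, is $(\varepsilon,\mu)$-admissible if there is a partition $\mathcal M=\bigcup_{k=1}^K\mathcal M_k$ with $\sup_{u\in\mathcal M_k}\operatorname{dist}(u,V_k)\le\varepsilon$ and $\mu(\bar V_k,W)\le\mu$ for all $k$. The PBDW estimators are $u_k^*(w)=\operatorname{argmin}\{\operatorname{dist}(v,V_k): v\in w+W^\perp\}$. For $\sigma\ge0$, $\mathcal M_\sigma=\{v\in V:\operatorname{dist}(v,\mathcal M)\le\sigma\}$ and $\delta_\sigma=\sup\{\|u-v\|: u,v\in\mathcal M_\sigma,\ u-v\in W^\perp\}$. *)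

From HB Require Import structures.
From mathcomp Require Import all_boot all_order all_algebra.
From mathcomp Require Import all_classical all_reals all_analysis.
Set Implicit Arguments. Unset Strict Implicit. Unset Printing Implicit Defensive.
Import Order.TTheory GRing.Theory Num.Theory.
Import numFieldNormedType.Exports.
Local Open Scope classical_set_scope.
Local Open Scope ring_scope.

Section Hilbert.
Variables (R : realType) (V : normedModType R).

(* Together with completeness of V
   (V : completeNormedModType R) this makes V a real Hilbert space. *)
Definition is_inner_product (ip : V -> V -> R) : Prop :=
  [/\ forall x y, ip x y = ip y x,
      forall a x y z, ip (a *: x + y) z = a * ip x z + ip y z
    & forall v, `|v| = Num.sqrt (ip v v)].

Definition span n (b : 'I_n -> V) : set V :=
  [set v | exists c : 'I_n -> R, v = \sum_(i < n) c i *: b i].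

Definition lin_indep n (b : 'I_n -> V) : Prop :=
  forall c : 'I_n -> R, \sum_(i < n) c i *: b i = 0 -> forall i, c i = 0.

Definition subspace_of_dim (A : set V) (n : nat) : Prop :=
  exists b : 'I_n -> V, lin_indep b /\ A = span b.

Definition orth (ip : V -> V -> R) (W : set V) : set V :=
  [set v | forall y, W y -> ip v y = 0].

Definition is_orth_proj (ip : V -> V -> R) (W : set V) (P : V -> V) : Prop :=
  forall v, W (P v) /\ orth ip W (v - P v).

Definition dist (v : V) (A : set V) : R := inf [set `|v - a| | a in A].

(* mu(Vbar, W) <= mu, for Vbar with Vbar \cap W^perp = {0}:
   max_{v in Vbar, v <> 0} |v| / |P_W v| <= mu *)
Definition mu_le (P : V -> V) (Vbar : set V) (mu : R) : Prop :=
  forall v, Vbar v -> v != 0 -> `|v| / `|P v| <= mu.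

Definition affine (ubar : V) (Vbar : set V) : set V := [set ubar + x | x in Vbar].

Definition fatten (M : set V) (sigma : R) : set V := [set v | dist v M <= sigma].

Definition delta (ip : V -> V -> R) (W M : set V) (sigma : R) : R :=
  sup [set d : R | exists x y : V,
        [/\ fatten M sigma x, fatten M sigma y, orth ip W (x - y) & d = `|x - y|]].

Definition admissible (ip : V -> V -> R) (W : set V) (m : nat) (P : V -> V)
  (M : set V) (K : nat) (ubar : 'I_K -> V) (Vbar : 'I_K -> set V)
  (eps mu : R) : Prop :=
  (forall k, exists2 n, (n <= m)%N & subspace_of_dim (Vbar k) n) /\
  (forall k, Vbar k `&` orth ip W = [set 0]) /\
  (exists Mk : 'I_K -> set V,
     [/\ M = \bigcup_(k in [set: 'I_K]) Mk k,
         (forall k l, k != l -> Mk k `&` Mk l = set0),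
         (forall k u, Mk k u -> dist u (affine (ubar k) (Vbar k)) <= eps)
       & (forall k, mu_le P (Vbar k) mu)]).

Definition is_pbdw (ip : V -> V -> R) (W : set V) (A : set V) (w v : V) : Prop :=
  orth ip W (v - w) /\
  forall v', orth ip W (v' - w) -> dist v A <= dist v' A.

End Hilbert.

From Pilot Require Import Defs.
From HB Require Import structures.
From mathcomp Require Import all_boot all_order all_algebra.
From mathcomp Require Import all_classical all_reals all_analysis.
From mathcomp Require Import ring lra.
Set Implicit Arguments. Unset Strict Implicit. Unset Printing Implicit Defensive.
Import Order.TTheory GRing.Theory Num.Theory.
Import numFieldNormedType.Exports.
Local Open Scope classical_set_scope.
Local Open Scope ring_scope.

(* For each k, a PBDW estimator for the data w = P u + eta is unique: it is
   a + (w - P a), where a in V_k is such that P a is the best approximation of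
   w in P V_k.  The inf-sup constant mu then gives the stability bound
   |u_k^* - u| <= mu (|u - a'| + |eta|) for every a' in V_k.  Taking k with
   u' in M_k close to u and a' in V_k close to u' yields dist(u_k^*, M) <= rho
   up to an arbitrarily small slack, so any minimizer of S satisfies
   dist(u^*, M) <= kappa rho.  Finally u + eta and u^* both lie in
   M_(kappa rho) and differ by an element of W^perp, so their distance is at
   most delta_(kappa rho). *)

Section InnerProduct.
Variables (R : realType) (V : normedModType R) (ip : V -> V -> R).
Hypothesis ipP : is_inner_product ip.

Lemma ipC x y : ip x y = ip y x.
Proof. by case: ipP. Qed.

Lemma ipDZl a x y z : ip (a *: x + y) z = a * ip x z + ip y z.
Proof. by case: ipP. Qed.

Lemma ipDl x y z : ip (x + y) z = ip x z + ip y z.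
Proof. by rewrite -[x]scale1r ipDZl mul1r scale1r. Qed.

Lemma ip0l z : ip 0 z = 0.
Proof. by apply: (addrI (ip 0 z)); rewrite -ipDl !addr0. Qed.

Lemma ipZl a x z : ip (a *: x) z = a * ip x z.
Proof. by rewrite -[a *: x]addr0 ipDZl ip0l addr0. Qed.

Lemma ipBl x y z : ip (x - y) z = ip x z - ip y z.
Proof. by rewrite -scaleN1r addrC ipDZl mulN1r addrC. Qed.

Lemma ipDr x y z : ip z (x + y) = ip z x + ip z y.
Proof. by rewrite ipC ipDl !(ipC _ z). Qed.

Lemma ip_sumr n (c : 'I_n -> R) (f : 'I_n -> V) z :
  ip z (\sum_(i < n) c i *: f i) = \sum_(i < n) c i * ip z (f i).
Proof.
have ipDl_z x y : ip (x + y) z = ip x z + ip y z by exact: ipDl.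
rewrite ipC (big_morph (ip^~ z) (id1 := 0) (op1 := +%R) ipDl_z (ip0l z)).
by apply: eq_bigr => i _; rewrite ipZl ipC.
Qed.

Lemma ipvv v : ip v v = `|v| ^+ 2.
Proof.
case: ipP => _ _ ->; rewrite sqr_sqrtr // leNgt; apply/negP => vv_lt0.
have /normr0_eq0 v0 : `|v| = 0 by case: ipP => _ _ ->; rewrite ler0_sqrtr ?ltW.
by move: vv_lt0; rewrite v0 ip0l ltxx.
Qed.

Lemma ipvv_eq0 v : ip v v = 0 -> v = 0.
Proof. by rewrite ipvv => /eqP; rewrite sqrf_eq0 normr_eq0 => /eqP. Qed.

Lemma pythagoras x y : ip x y = 0 -> `|x + y| ^+ 2 = `|x| ^+ 2 + `|y| ^+ 2.
Proof. by move=> xy0; rewrite -!ipvv ipDl !ipDr xy0 (ipC y x) xy0 addr0 add0r. Qed.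

(* Gram-Schmidt step: g is the residual of f_0 against the other vectors and
   the residual of x is corrected along g; if g = 0 then f_0 lies in the span
   of the others and lam is irrelevant. *)
Lemma exists_orth_residual n (f : 'I_n -> V) x :
  exists c : 'I_n -> R, forall j, ip (x - \sum_(i < n) c i *: f i) (f j) = 0.
Proof.
elim: n f x => [|n IH] f x; first by exists (fun=> 0) => -[].
pose f' i := f (lift ord0 i).
have [c Hc] := IH f' x; have [d Hd] := IH f' (f ord0).
pose g := f ord0 - \sum_(i < n) d i *: f' i.
have sum_lift (e : 'I_n.+1 -> R) : \sum_(i < n.+1) e i *: f i
    = e ord0 *: f ord0 + \sum_(i < n) e (lift ord0 i) *: f' i.
  by rewrite big_ord_recl.
pose lam := if ip g g == 0 then 0 else ip (x - \sum_(i < n) c i *: f' i) g / ip g g.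
exists (fun i => if unlift ord0 i is Some j then c j - lam * d j else lam) => j.
rewrite sum_lift unlift_none; under eq_bigr => i _ do rewrite liftK scalerBl -scalerA.
rewrite sumrB -scaler_sumr.
have -> : x - (lam *: f ord0
      + (\sum_(i < n) c i *: f' i - lam *: \sum_(i < n) d i *: f' i))
    = (x - \sum_(i < n) c i *: f' i) - lam *: g.
  by rewrite /g scalerBr [lam *: f ord0 + _]addrCA opprD addrA.
have gf' i : ip g (f' i) = 0 by exact: Hd.
case: (unliftP ord0 j) => [j'|] ->; first by rewrite ipBl ipZl gf' mulr0 subr0 Hc.
have -> : f ord0 = g + \sum_(i < n) d i *: f' i by rewrite subrK.
rewrite ipDr ip_sumr [X in _ + X]big1 => [|i _]; last first.
  by rewrite ipBl ipZl gf' mulr0 subr0 Hc mulr0.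
rewrite addr0 ipBl ipZl /lam; case: eqP => [/ipvv_eq0 g0|gg0].
  by rewrite g0 !(ipC _ 0) !ip0l mulr0 subr0.
by rewrite divfK ?subrr //; apply/eqP.
Qed.

End InnerProduct.

Section Distance.
Variables (R : realType) (V : normedModType R).

Lemma has_inf_dist (v : V) (A : set V) :
  A !=set0 -> has_inf [set `|v - a| | a in A].
Proof.
by case=> a Aa; split; [exists `|v - a|, a | exists 0 => _ [b _ <-]].
Qed.

Lemma dist_le (v a : V) (A : set V) : A a -> dist v A <= `|v - a|.
Proof.
by move=> Aa; apply: ge_inf; [case: (has_inf_dist v (ex_intro _ a Aa)) | exists a].
Qed.

Lemma dist_ge0 (v : V) (A : set V) : A !=set0 -> 0 <= dist v A.
Proof.
by case=> a Aa; apply: lb_le_inf => [|_ [b _ <-]]; first by exists `|v - a|, a.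
Qed.

Lemma dist_approx (v : V) (A : set V) t : A !=set0 -> 0 < t ->
  exists2 a, A a & `|v - a| < dist v A + t.
Proof.
move=> An0 t0; have [_ [a Aa <-] ?] := inf_adherent t0 (has_inf_dist v An0).
by exists a.
Qed.

Lemma dist_lipschitz (x y : V) (A : set V) : A !=set0 ->
  dist x A <= dist y A + `|x - y|.
Proof.
case=> a0 Aa0; rewrite -lerBlDr; apply: lb_le_inf; first by exists `|y - a0|, a0.
move=> _ [a Aa <-]; rewrite lerBlDr (le_trans (dist_le x Aa)) //.
by rewrite -(subrKA y) addrC ler_normD.
Qed.

End Distance.

Section Span.
Variables (R : realType) (V : normedModType R) (n : nat) (b : 'I_n -> V).

Lemma spanD x y : Defs.span b x -> Defs.span b y -> Defs.span b (x + y).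
Proof.
move=> [c ->] [d ->]; exists (fun i => c i + d i).
by rewrite -big_split; apply: eq_bigr => i _; rewrite scalerDl.
Qed.

Lemma spanZ a x : Defs.span b x -> Defs.span b (a *: x).
Proof.
move=> [c ->]; exists (fun i => a * c i).
by rewrite scaler_sumr; apply: eq_bigr => i _; rewrite scalerA.
Qed.

Lemma spanB x y : Defs.span b x -> Defs.span b y -> Defs.span b (x - y).
Proof. by move=> bx by_; rewrite -scaleN1r; apply: spanD => //; apply: spanZ. Qed.

Lemma affine_subB (ubar a1 a2 : V) :
  affine ubar (Defs.span b) a1 -> affine ubar (Defs.span b) a2 -> Defs.span b (a1 - a2).
Proof.
by move=> [y1 by1 <-] [y2 by2 <-]; rewrite opprD addrACA subrr add0r; apply: spanB.
Qed.

End Span.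

Section NearestPoint.
Variables (R : realType) (V : normedModType R) (ip : V -> V -> R).
Hypothesis ipP : is_inner_product ip.

Lemma span_nearest n (b : 'I_n -> V) v :
  exists2 y, Defs.span b y & forall z, Defs.span b z -> `|v - y| <= `|v - z|.
Proof.
have [c Hc] := exists_orth_residual ipP b v.
set y := \sum_(i < n) c i *: b i in Hc *; exists y; first by exists c.
move=> _ [e ->]; set z := \sum_(i < n) _.
have yz : y - z = \sum_(i < n) (c i - e i) *: b i.
  by rewrite -sumrB; apply: eq_bigr => i _; rewrite scalerBl.
have orth_yz : ip (v - y) (y - z) = 0.
  by rewrite yz (ip_sumr ipP) big1 // => i _; rewrite Hc mulr0.
have -> : v - z = (v - y) + (y - z) by rewrite addrA subrK.
by rewrite -ler_sqr ?nnegrE // (pythagoras ipP orth_yz) lerDl sqr_ge0.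
Qed.

Lemma affine_dist_attained (ubar : V) n (b : 'I_n -> V) v :
  exists2 a, affine ubar (Defs.span b) a
    & `|v - a| <= dist v (affine ubar (Defs.span b)).
Proof.
have [y By ymin] := span_nearest b (v - ubar).
exists (ubar + y); first by exists y.
apply: lb_le_inf; first by exists `|v - (ubar + y)|, (ubar + y) => //; exists y.
by move=> _ [_ [z Bz <-] <-]; rewrite !opprD !addrA; apply: ymin.
Qed.

End NearestPoint.

Lemma pbdw_sqr_bound (R : rcfType) (mu n p q r B : R) :
  1 <= mu -> 0 <= n -> 0 <= p -> 0 <= q -> 0 <= r -> 0 <= B ->
  r ^+ 2 = p ^+ 2 + q ^+ 2 -> B ^+ 2 <= (mu ^+ 2 - 1) * (p + n) ^+ 2 ->
  n ^+ 2 + (B + q) ^+ 2 <= mu ^+ 2 * (r + n) ^+ 2.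
Proof.
move=> mu1 n0 p0 q0 r0 B0 r2 B2.
pose s := Num.sqrt (mu ^+ 2 - 1).
have s0 : 0 <= s by apply: sqrtr_ge0.
have s2 : s ^+ 2 = mu ^+ 2 - 1 by rewrite sqr_sqrtr // subr_ge0; nra.
have Bs : B <= s * (p + n) by rewrite -ler_sqr ?nnegrE ?exprMn ?s2; nra.
(* Cauchy-Schwarz for (s, 1) and (p, q), as mu ^+ 2 = s ^+ 2 + 1 *)
have cs : s * p + q <= mu * r.
  rewrite -ler_sqr ?nnegrE; [|nra|nra].
  have := sqr_ge0 (s * q - p); nra.
have smu : s <= mu by rewrite -ler_sqr ?nnegrE; nra.
have Bq : (B + q) ^+ 2 <= (mu * r + s * n) ^+ 2.
  have sn0 : 0 <= s * n by apply: mulr_ge0.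
  have mur0 : 0 <= mu * r by apply: mulr_ge0 => //; lra.
  rewrite ler_sqr ?nnegrE; [| lra | lra].
  by move: Bs; rewrite mulrDr; lra.
have gap : 0 <= mu * r * n * (mu - s) by rewrite !mulr_ge0 // ?subr_ge0 //; lra.
have : mu ^+ 2 * (r + n) ^+ 2
    - (n ^+ 2 + (mu * r + s * n) ^+ 2 + 2 * (mu * r * n * (mu - s)))
    = (mu ^+ 2 - 1 - s ^+ 2) * n ^+ 2 by ring.
rewrite s2 subrr mul0r; lra.
Qed.

Lemma subrACA (G : zmodType) (x y z t : G) : (x - y) - (z - t) = (x - z) - (y - t).
Proof. by rewrite !opprB addrACA [RHS]addrACA [- z + _]addrC. Qed.

Section Projection.
Variables (R : realType) (V : normedModType R) (ip : V -> V -> R).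
Hypothesis ipP : is_inner_product ip.
Variables (W : set V) (P : V -> V).
Hypothesis PP : is_orth_proj ip W P.
Hypothesis WD : forall x y, W x -> W y -> W (x + y).
Hypothesis WZ : forall a x, W x -> W (a *: x).

Lemma subW x y : W x -> W y -> W (x - y).
Proof. by move=> Wx Wy; rewrite -scaleN1r; apply: WD => //; apply: WZ. Qed.

Lemma orthD x y : orth ip W x -> orth ip W y -> orth ip W (x + y).
Proof. by move=> ox oy z Wz; rewrite (ipDl ipP) ox ?oy ?addr0. Qed.

Lemma orthZ a x : orth ip W x -> orth ip W (a *: x).
Proof. by move=> ox z Wz; rewrite (ipZl ipP) ox ?mulr0. Qed.

Lemma orthB x y : orth ip W x -> orth ip W y -> orth ip W (x - y).
Proof. by move=> ox oy; rewrite -scaleN1r; apply: orthD => //; apply: orthZ. Qed.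

Lemma proj_in v : W (P v). Proof. by case: (PP v). Qed.

Lemma proj_orth v : orth ip W (v - P v). Proof. by case: (PP v). Qed.

Lemma proj_unique v y : W y -> orth ip W (v - y) -> P v = y.
Proof.
move=> Wy oy; apply/eqP; rewrite -subr_eq0; apply/eqP/(ipvv_eq0 ipP).
have WPy : W (P v - y) by apply: subW => //; apply: proj_in.
suff o : orth ip W (P v - y) by exact: o WPy.
have -> : P v - y = (v - y) - (v - P v) by rewrite opprB [RHS]addrC addrA subrK.
by apply: orthB => //; apply: proj_orth.
Qed.

Lemma projD x y : P (x + y) = P x + P y.
Proof.
apply: proj_unique; first by apply: WD; apply: proj_in.
by rewrite opprD addrACA; apply: orthD; apply: proj_orth.
Qed.

Lemma projZ a x : P (a *: x) = a *: P x.
Proof.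
apply: proj_unique; first by apply: WZ; apply: proj_in.
by rewrite -scalerBr; apply: orthZ; apply: proj_orth.
Qed.

Lemma projB x y : P (x - y) = P x - P y.
Proof. by rewrite -scaleN1r projD projZ scaleN1r. Qed.

Lemma projW y : W y -> P y = y.
Proof. by move=> Wy; apply: proj_unique => // z _; rewrite subrr (ip0l ipP). Qed.

Lemma proj0 : P 0 = 0.
Proof. by rewrite -(scale0r 0) projZ !scale0r. Qed.

Lemma proj_sum n (c : 'I_n -> R) (f : 'I_n -> V) :
  P (\sum_(i < n) c i *: f i) = \sum_(i < n) c i *: P (f i).
Proof.
by rewrite (big_morph P projD proj0); apply: eq_bigr => i _; rewrite projZ.
Qed.

Lemma normD_proj v : `|v| ^+ 2 = `|P v| ^+ 2 + `|v - P v| ^+ 2.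
Proof.
rewrite -(pythagoras ipP) ?[_ + (v - _)]addrC ?subrK //.
by rewrite (ipC ipP); apply: proj_orth; apply: proj_in.
Qed.

Variables (n : nat) (bV : 'I_n -> V) (ubar : V) (mu : R).
Hypothesis mu_bound : mu_le P (Defs.span bV) mu.
Hypothesis span_orth0 : Defs.span bV `&` orth ip W = [set 0].

Local Notation A := (affine ubar (Defs.span bV)).

Lemma norm_le_proj y : Defs.span bV y -> `|y| <= mu * `|P y|.
Proof.
move=> By; have [->|y0] := eqVneq y 0; first by rewrite proj0 normr0 mulr0.
have Py0 : P y != 0.
  apply: contra_neq y0 => Py0; have : (Defs.span bV `&` orth ip W) y.
    by split=> //; move: (proj_orth y); rewrite Py0 subr0.
  by rewrite span_orth0.
by rewrite -ler_pdivrMr ?normr_gt0 //; apply: mu_bound.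
Qed.

Lemma sqr_norm_proj_compl y : Defs.span bV y ->
  `|y - P y| ^+ 2 <= (mu ^+ 2 - 1) * `|P y| ^+ 2.
Proof.
move=> By; have := norm_le_proj By; have := normD_proj y.
have := normr_ge0 y; have := normr_ge0 (P y); nra.
Qed.

Lemma exists_proj_best_fit w :
  exists2 a, A a & forall y, Defs.span bV y -> ip (w - P a) (P y) = 0.
Proof.
have [c Hc] := exists_orth_residual ipP (P \o bV) (w - P ubar).
exists (ubar + \sum_(i < n) c i *: bV i).
  by exists (\sum_(i < n) c i *: bV i) => //; exists c.
move=> _ [e ->]; rewrite !proj_sum (ip_sumr ipP) big1 // => i _.
by rewrite projD proj_sum opprD addrA Hc mulr0.
Qed.

(* The estimator is unique: for the nearest point a0 of A to vs, the
   optimality of vs against the candidate a + (w - P a) forces P (a - a0) = 0,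
   hence a0 = a by the inf-sup bound, and vs - a0 to lie in W. *)
Lemma pbdwE (w a vs : V) : W w -> A a ->
  (forall y, Defs.span bV y -> ip (w - P a) (P y) = 0) ->
  is_pbdw ip W A w vs -> vs = a + (w - P a).
Proof.
move=> Ww Aa fit [vs_w vs_min]; set g := w - P a in fit *.
have Pvs : P vs = w := proj_unique Ww vs_w.
have [a0 Aa0 a0_min] := affine_dist_attained ipP ubar bV vs.
have Bd : Defs.span bV (a - a0) := affine_subB Aa Aa0.
have near : `|vs - a0| ^+ 2 <= `|g| ^+ 2.
  rewrite ler_sqr ?nnegrE //; apply: le_trans a0_min _.
  apply: le_trans (vs_min (a + g) _) _.
    by rewrite /g addrA addrAC addrK; apply: proj_orth.
  by have := dist_le (a + g) Aa; rewrite addrC addrK.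
have splitE : `|vs - a0| ^+ 2
    = `|g| ^+ 2 + `|P (a - a0)| ^+ 2 + `|(vs - a0) - P (vs - a0)| ^+ 2.
  rewrite normD_proj projB Pvs.
  have -> : w - P a0 = g + P (a - a0) by rewrite projB /g addrA subrK.
  by rewrite (pythagoras ipP) ?fit.
have /eqP : `|P (a - a0)| ^+ 2 + `|(vs - a0) - P (vs - a0)| ^+ 2 = 0.
  apply/le_anti; rewrite addr_ge0 ?sqr_ge0 // andbT; move: near; rewrite splitE; lra.
rewrite paddr_eq0 ?sqr_ge0 // !sqrf_eq0 !normr_eq0 => /andP [/eqP Pd0 /eqP Qd0].
have a0E : a0 = a.
  apply/esym/subr0_eq/normr0_eq0/le_anti; rewrite normr_ge0 andbT.
  by have := norm_le_proj Bd; rewrite Pd0 normr0 mulr0.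
have vsE : vs - a0 = g by rewrite (subr0_eq Qd0) projB Pvs a0E.
by rewrite -vsE a0E [RHS]addrC subrK.
Qed.

(* w - P a' splits orthogonally as (w - P a) + P (a - a'), which bounds
   P (a - a'); the W-orthogonal part of a - a' is then controlled by mu. *)
Lemma pbdw_error (x eta vs a' : V) : 1 <= mu -> W eta ->
  is_pbdw ip W A (P x + eta) vs -> A a' -> `|vs - x| <= mu * (`|x - a'| + `|eta|).
Proof.
move=> mu1 Weta vs_pbdw Aa'; set w := P x + eta in vs_pbdw.
have Ww : W w by apply: WD => //; apply: proj_in.
have [a Aa fit] := exists_proj_best_fit w.
have vsE := pbdwE Ww Aa fit vs_pbdw; set g := w - P a in fit vsE.
have Wg : W g by apply: subW => //; apply: proj_in.
set b := a - a'; set e := x - a'.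
have Bb : Defs.span bV b := affine_subB Aa Aa'.
have P_err : P (vs - x) = eta.
  by rewrite vsE projB projD (projW Wg) /g [P a + _]addrC subrK /w addrAC subrr add0r.
have Q_err : (vs - x) - P (vs - x) = (b - P b) - (e - P e).
  have -> : vs - x = (b - e) + g by rewrite vsE /b /e opprB subrKA addrAC.
  by rewrite projD (projW Wg) (projB b e) (addrC (P b - P e)) addrKA subrACA.
have Pb_le : `|P b| <= `|P e| + `|eta|.
  have gPb : g + P b = P e + eta by rewrite /b /e !projB /g /w addrA subrK addrAC.
  rewrite -ler_sqr ?nnegrE ?addr_ge0 //; apply: le_trans (_ : _ <= `|g + P b| ^+ 2) _.
    by rewrite (pythagoras ipP) ?fit // lerDr sqr_ge0.
  by rewrite gPb ler_sqr ?nnegrE ?addr_ge0 // ler_normD.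
have Qb_le : `|b - P b| ^+ 2 <= (mu ^+ 2 - 1) * (`|P e| + `|eta|) ^+ 2.
  apply: le_trans (sqr_norm_proj_compl Bb) _; apply: ler_wpM2l; first nra.
  by rewrite ler_sqr ?nnegrE ?addr_ge0.
rewrite -ler_sqr ?nnegrE ?mulr_ge0 ?addr_ge0 //; last lra.
rewrite normD_proj Q_err P_err exprMn.
apply: le_trans (_ : _ <= `|eta| ^+ 2 + (`|b - P b| + `|e - P e|) ^+ 2) _.
  by rewrite lerD2l ler_sqr ?nnegrE ?addr_ge0 // ler_normB.
by apply: (pbdw_sqr_bound mu1 (normr_ge0 _) (normr_ge0 _) (normr_ge0 _) (normr_ge0 _)
  (normr_ge0 _) (normD_proj e) Qb_le).
Qed.

End Projection.

Lemma le_of_argmin_equiv (R : realFieldType) (I : Type) (f g : I -> R) (r Rr c : R) ks :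
  0 < r -> r <= Rr -> (forall e, 0 < e -> exists k, f k <= c + e) ->
  (forall k, r * f k <= g k /\ g k <= Rr * f k) -> (forall k, g ks <= g k) ->
  f ks <= Rr / r * c.
Proof.
move=> r0 rRr near fg g_min; have Rr0 : 0 < Rr := lt_le_trans r0 rRr.
apply/ler_addgt0Pr => e e0.
have [k fk] := near (r * e / Rr) (divr_gt0 (mulr_gt0 r0 e0) Rr0).
have : r * f ks <= Rr * (c + r * e / Rr).
  apply: le_trans (fg ks).1 (le_trans (g_min k) (le_trans (fg k).2 _)).
  by rewrite ler_pM2l.
have -> : Rr / r * c + e = r^-1 * (Rr * (c + r * e / Rr)).
  by field; rewrite !lt0r_neq0.
by rewrite ler_pdivlMl.
Qed.

Section Recovery.
Variables (R : realType) (V : normedModType R) (ip : V -> V -> R).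
Hypothesis ipP : is_inner_product ip.
Variables (W : set V) (P : V -> V).
Hypothesis PP : is_orth_proj ip W P.
Hypothesis WD : forall x y, W x -> W y -> W (x + y).
Hypothesis WZ : forall a x, W x -> W (a *: x).
Variable M : set V.
Hypothesis M_compact : compact M.
Hypothesis M_neq0 : M !=set0.

Lemma fatten_bounded sigma : exists B, forall x, fatten M sigma x -> `|x| <= B.
Proof.
have [B [_ MB]] := compact_bounded M_compact.
exists (sigma + 1 + (B + 1)) => x Mx.
have [a Ma xa] := dist_approx x M_neq0 ltr01.
have aB : `|a| <= B + 1 by apply: (MB (B + 1)) => //; rewrite ltrDl.
have : `|x| <= `|x - a| + `|a| by rewrite -{1}(subrK a x) ler_normD.
by rewrite /fatten /= in Mx; lra.
Qed.

Lemma le_delta sigma x y : fatten M sigma x -> fatten M sigma y ->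
  orth ip W (x - y) -> `|x - y| <= delta ip W M sigma.
Proof.
move=> Mx My oxy; apply: sup_upper_bound; last by exists x, y.
split; first by exists `|x - y|, x, y.
have [B MB] := fatten_bounded sigma.
exists (B + B) => _ [x' [y' [Mx' My' _ ->]]].
by apply: le_trans (ler_normB _ _) _; apply: lerD; apply: MB.
Qed.

Variables (m K : nat) (ubar : 'I_K -> V) (Vbar : 'I_K -> set V).
Variables (eps mu eps_model eps_noise : R) (u eta : V) (ustar : 'I_K -> V).
Hypothesis mu_ge1 : 1 <= mu.
Hypothesis admissibleV : admissible ip W m P M ubar Vbar eps mu.
Hypothesis u_near : dist u M <= eps_model.
Hypothesis W_eta : W eta.
Hypothesis eta_small : `|eta| <= eps_noise.
Hypothesis ustar_pbdw :
  forall k, is_pbdw ip W (affine (ubar k) (Vbar k)) (P u + eta) (ustar k).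

Lemma exists_pbdw_near (e : R) : 0 < e -> exists k,
  dist (ustar k) M <= mu * (eps + eps_noise) + (mu + 1) * eps_model + e.
Proof.
move=> e0; have [dimV [orth0 [Mk [MkU _ Mk_near mu_bound]]]] := admissibleV.
have mu1_gt0 : 0 < mu + 1 := addr_gt0 (lt_le_trans ltr01 mu_ge1) ltr01.
have t0 : 0 < e / (mu + 1) := divr_gt0 e0 mu1_gt0.
have [u' Mu' uu'] := dist_approx u M_neq0 t0.
have [k _ Mk_u'] : (\bigcup_(k in [set: 'I_K]) Mk k) u' by rewrite -MkU.
exists k; have [nk _ [bk [_ Vk]]] := dimV k.
have := Mk_near k u' Mk_u'; have := ustar_pbdw k; have := orth0 k; have := mu_bound k.
rewrite Vk => muk orthk pbdwk u'k.
have [a' Aa' u'a'] := affine_dist_attained ipP (ubar k) bk u'.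
have err := pbdw_error ipP PP WD WZ muk orthk mu_ge1 W_eta pbdwk Aa'.
have ua' : `|u - a'| <= `|u - u'| + `|u' - a'| by rewrite -(subrKA u') ler_normD.
have dk : dist (ustar k) M <= `|ustar k - u| + `|u - u'|.
  by apply: le_trans (dist_le _ Mu') _; rewrite -(subrKA u) ler_normD.
have : `|u - u'| * (mu + 1) < eps_model * (mu + 1) + e.
  rewrite -[e in X in _ < X](divfK (lt0r_neq0 mu1_gt0)) -mulrDl ltr_pM2r //.
  by have := u_near; lra.
have := mu_ge1; have := eta_small; nra.
Qed.

Lemma recovery_le_delta vs sigma : orth ip W (vs - (P u + eta)) ->
  eps_model + eps_noise <= sigma -> dist vs M <= sigma ->
  `|u - vs| <= delta ip W M sigma + eps_noise.
Proof.
move=> o_vs sigma_ge vs_near.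
have ueta_near : fatten M sigma (u + eta).
  rewrite /fatten /= (le_trans (dist_lipschitz _ u M_neq0)) //.
  by rewrite addrAC subrr add0r; have := u_near; have := eta_small; lra.
have o : orth ip W (u + eta - vs).
  have -> : u + eta - vs = (u - P u) - (vs - (P u + eta)).
    by rewrite opprB addrA subrKA.
  by apply: (orthB ipP) => //; apply: (proj_orth PP).
have := le_delta ueta_near vs_near o.
have -> : u - vs = (u + eta - vs) - eta by rewrite addrAC addrK.
by have := ler_normB (u + eta - vs) eta; have := eta_small; lra.
Qed.

End Recovery.

Theorem theorem3p4 (R : realType) (V : completeNormedModType R)
  (ip : V -> V -> R) (W : set V) (m : nat) (P : V -> V) (M : set V)
  (K : nat) (ubar : 'I_K -> V) (Vbar : 'I_K -> set V)
  (eps mu eps_model eps_noise : R) (u eta : V) (ustar : 'I_K -> V) :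
  is_inner_product ip ->
  subspace_of_dim W m ->
  is_orth_proj ip W P ->
  compact M -> M !=set0 ->
  0 < eps -> 1 <= mu ->
  admissible ip W m P M ubar Vbar eps mu ->
  dist u M <= eps_model ->
  W eta -> `|eta| <= eps_noise ->
  (forall k, is_pbdw ip W (affine (ubar k) (Vbar k)) (P u + eta) (ustar k)) ->
  let rho := mu * (eps + eps_noise) + (mu + 1) * eps_model in
  (forall (S : V -> R) (r Rr : R),
     (forall v, 0 <= S v) -> 0 < r -> r <= Rr ->
     (forall v, r * dist v M <= S v /\ S v <= Rr * dist v M) ->
     forall kstar : 'I_K, (forall k, S (ustar kstar) <= S (ustar k)) ->
     `|u - ustar kstar| <= delta ip W M (Rr / r * rho) + eps_noise) /\
  (forall kstar : 'I_K, (forall k, dist (ustar kstar) M <= dist (ustar k) M) ->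
     `|u - ustar kstar| <= delta ip W M (1 * rho) + eps_noise).
Proof.
move=> ipP [bW [_ ->]] PP cM M0 eps0 mu1 adm u_near W_eta eta_small pbdw rho.
have near := exists_pbdw_near ipP PP (@spanD _ _ _ bW) (@spanZ _ _ _ bW) M0 mu1 adm
  u_near W_eta eta_small pbdw.
have em0 : 0 <= eps_model := le_trans (dist_ge0 u M0) u_near.
have en0 : 0 <= eps_noise := le_trans (normr_ge0 eta) eta_small.
have rho_ge : eps_model + eps_noise <= rho by rewrite /rho; nra.
have rho0 : 0 <= rho := le_trans (addr_ge0 em0 en0) rho_ge.
have main : forall (S : V -> R) (r Rr : R) (ks : 'I_K), 0 < r -> r <= Rr ->
    (forall v, r * dist v M <= S v /\ S v <= Rr * dist v M) ->
    (forall k, S (ustar ks) <= S (ustar k)) ->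
    `|u - ustar ks| <= delta ip (Defs.span bW) M (Rr / r * rho) + eps_noise.
  move=> S r Rr ks r0 rRr S_dist ks_min.
  apply: (recovery_le_delta ipP PP cM M0 u_near eta_small (pbdw ks).1).
    by apply: le_trans rho_ge (ler_peMl rho0 _); rewrite ler_pdivlMr // mul1r.
  exact: le_of_argmin_equiv r0 rRr near (fun k => S_dist (ustar k)) ks_min.
split=> [S r Rr _ r0 rRr S_dist ks ks_min | ks ks_min]; first exact: main S_dist ks_min.
have -> : 1 * rho = 1 / 1 * rho by rewrite divr1.
apply: (main (fun v => dist v M) 1 1 ks ltr01 (lexx 1) _ ks_min) => v.
by rewrite mul1r lexx.
Qed.
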